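(* For all $n\ge 2$, $f_n=g_{n-1}-g_{n-2}$.
   Context: For $x\in S_n$, $\mathrm{ind}_x(a)$ is the position of the value $a$ in $x$, and $\mathrm{small}_{k}(x)$ is the subsequence of $x$ formed by the entries $1,\dots,k$. An occurrence of the bivincular pattern $123^{\star}$ in $x$ is a pair of indices $a<b<n$ with $x_a<x_b$ and $x_{b+1}=x_b+1$. Let $g_n=|\mathrm{Av}_n(132,123^{\star})|$ be the number of permutations in $S_n$ avoiding both the classical pattern $132$ and $123^{\star}$ (with $g_0=1$), and let $f_n$ be the number of $x\in S_n$ avoiding $132$ such that $\mathrm{ind}_x(n)-1=\mathrm{ind}_x(n-1)>1$ and $\mathrm{small}_{n-1}(x)$ avoids $123^{\star}$. *)

From mathcomp Require Import all_boot all_order all_algebra.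
Set Implicit Arguments. Unset Strict Implicit. Unset Printing Implicit Defensive.

(* Positions are 1-indexed in the
   paper; here nth is 0-indexed, which does not matter for pattern
   conditions stated via relative order of indices. *)

Definition perms (n : nat) : seq (seq nat) := permutations (iota 1 n).

Definition contains132 (s : seq nat) : bool :=
  [exists i : 'I_(size s), exists j : 'I_(size s), exists k : 'I_(size s),
     (i < j < k) && (nth 0 s i < nth 0 s k < nth 0 s j)].

Definition avoids132 (s : seq nat) : bool := ~~ contains132 s.

Definition has123star (s : seq nat) : bool :=
  [exists a : 'I_(size s), exists b : 'I_(size s),
     [&& a < b, b.+1 < size s, nth 0 s a < nth 0 s b
       & nth 0 s b.+1 == (nth 0 s b).+1]].

Definition avoids123star (s : seq nat) : bool := ~~ has123star s.

Definition ind (x : seq nat) (a : nat) : nat := (index a x).+1.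

Definition small (k : nat) (x : seq nat) : seq nat := [seq v <- x | v <= k].

Definition g (n : nat) : nat :=
  size [seq x <- perms n | avoids132 x && avoids123star x].

Definition f (n : nat) : nat :=
  size [seq x <- perms n |
         [&& avoids132 x,
             (ind x n).-1 == ind x n.-1,
             1 < ind x n.-1
           & avoids123star (small n.-1 x)]].

From mathcomp Require Import all_boot all_order all_algebra.
Set Implicit Arguments. Unset Strict Implicit. Unset Printing Implicit Defensive.

(* Write n = m + 1.  Inserting m + 1 right after m is a bijection from the
   permutations y of S_m avoiding 132 and 123* in which m is not in first
   position onto the permutations counted by f_(m+1), with inverse small_m:
   the adjacent pair m, m + 1 above all other values behaves like the single
   maximum m with respect to 132, and small_m removes m + 1 again.  The
   remaining avoiders of S_m, those starting with m, are exactly m :: z for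
   the avoiders z of S_(m-1), because a leading maximum takes part in no
   occurrence of 132 or 123*.  Hence g_m = g_(m-1) + f_(m+1). *)

Section SeqFacts.

Variable T : eqType.
Implicit Types (x y : T) (s u w : seq T).

Lemma subseq_pivotP x u w s :
  reflect (exists s1 s2, [/\ s = s1 ++ x :: s2, subseq u s1 & subseq w s2])
          (subseq (u ++ x :: w) s).
Proof.
apply: (iffP idP) => [|[s1 [s2 [-> us1 ws2]]]]; last by rewrite cat_subseq //= eqxx.
elim: s u => [|y s IHs] [|z u] //=.
- case: eqP => [<- xws | _ /(IHs [::]) [s1 [s2 [-> _ ws2]]]].
    by exists [::], s.
  by exists (y :: s1), s2.
- case: eqP => [<- /IHs [s1 [s2 [-> us1 ws2]]] | _ /(IHs (z :: u))].
    by exists (z :: s1), s2; rewrite /= eqxx.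
  case=> s1 [s2 [-> us1 ws2]]; exists (y :: s1), s2; split=> //.
  exact: subseq_trans us1 (subseq_cons _ _).
Qed.

Lemma index_succ_split x y s : y \in s -> index y s = (index x s).+1 ->
  s = take (index x s) s ++ x :: y :: drop (index x s).+2 s.
Proof.
move=> ys ixy; have ys' := ys; rewrite -index_mem ixy in ys'.
have xs : x \in s by rewrite -index_mem ltnW.
rewrite -{1}(cat_take_drop (index x s) s) (drop_nth x) ?index_mem // nth_index //.
by rewrite (drop_nth x) // -ixy nth_index.
Qed.

Lemma count_bij (U : eqType) (s : seq T) (t : seq U) (p : pred T) (q : pred U)
    (h : T -> U) (k : U -> T) :
  uniq s -> uniq t ->
  {in s, forall x, p x -> [/\ h x \in t, q (h x) & k (h x) = x]} ->
  {in t, forall y : U, q y -> [/\ k y \in s, p (k y) & h (k y) = y]} ->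
  count p s = count q t.
Proof.
move=> s_uniq t_uniq hK kK; rewrite -!size_filter -(size_map h).
apply/perm_size/uniq_perm; rewrite ?filter_uniq //.
  rewrite map_inj_in_uniq ?filter_uniq // => x1 x2.
  rewrite !mem_filter => /andP[px1 sx1] /andP[px2 sx2] hx12.
  by have [_ _ <-] := hK x1 sx1 px1; have [_ _ <-] := hK x2 sx2 px2; rewrite hx12.
move=> y; rewrite mem_filter; apply/mapP/andP => [[x] | [qy ty]].
  by rewrite mem_filter => /andP[px sx] ->; have [] := hK x sx px.
by have [ks pk <-] := kK y ty qy; exists (k y); rewrite ?mem_filter ?pk.
Qed.

End SeqFacts.

Lemma contains132P s :
  reflect (exists a b c, subseq [:: a; b; c] s /\ a < c < b) (contains132 s).
Proof.
apply: (iffP existsP) => [[i /existsP[j /existsP[k /andP[/andP[ij jk] cb]]]] |].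
  exists (nth 0 s i), (nth 0 s j), (nth 0 s k); split=> //.
  apply/(subseq_pivotP _ [:: _] [:: _]); exists (take j s), (drop j.+1 s).
  rewrite !sub1seq -drop_nth // cat_take_drop; split=> //.
    by rewrite -(nth_take _ ij) mem_nth // size_take ltn_ord ij.
  by rewrite -[k : nat](subnKC jk) -nth_drop mem_nth // size_drop ltn_sub2rE.
case=> a [b [c [/(subseq_pivotP _ [:: a] [:: c]) [s1 [s2 [-> a_s1 c_s2]]] ac_cb]]].
rewrite !sub1seq in a_s1 c_s2.
have size_s : size (s1 ++ b :: s2) = size s1 + (size s2).+1 by rewrite size_cat.
have lt_i : index a s1 < size (s1 ++ b :: s2) by rewrite size_s ltn_addr ?index_mem.
have lt_j : size s1 < size (s1 ++ b :: s2) by rewrite size_s -addSnnS leq_addr.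
have lt_k : size s1 + (index c s2).+1 < size (s1 ++ b :: s2).
  by rewrite size_s ltn_add2l ltnS index_mem.
exists (Ordinal lt_i); apply/existsP; exists (Ordinal lt_j); apply/existsP.
exists (Ordinal lt_k); rewrite /= index_mem a_s1 addnS ltnS leq_addr /=.
rewrite !nth_cat index_mem a_s1 ltnn subnn -addnS (ltnNge _ (size s1)) leq_addr.
by rewrite addKn /= !nth_index.
Qed.

Lemma contains132_subseq s t : subseq s t -> contains132 s -> contains132 t.
Proof.
move=> st /contains132P [a [b [c [abc acb]]]].
by apply/contains132P; exists a, b, c; split; first exact: subseq_trans st.
Qed.

Lemma has123starP s : reflect (exists a b, [/\ a < b, b.+1 < size s,
    nth 0 s a < nth 0 s b & nth 0 s b.+1 = (nth 0 s b).+1]) (has123star s).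
Proof.
apply: (iffP existsP) => [[a /existsP[b /and4P[ab bs lt_ab /eqP succ_b]]] |].
  by exists a, b.
case=> a [b [ab bs lt_ab succ_b]].
have lt_b : b < size s by rewrite ltnW.
have lt_a : a < size s by rewrite (ltn_trans ab).
exists (Ordinal lt_a); apply/existsP; exists (Ordinal lt_b).
by rewrite /= ab bs lt_ab succ_b eqxx.
Qed.

Lemma contains132_cons_max m z : {in z, forall v, v < m} ->
  contains132 (m :: z) = contains132 z.
Proof.
move=> z_lt; apply/idP/idP; last exact/contains132_subseq/subseq_cons.
case/contains132P => a [b [c [/= + acb]]].
case: eqP => [a_m bcz | _ abcz]; last by apply/contains132P; exists a, b, c.
have /z_lt : c \in z by apply: (mem_subseq bcz); rewrite !inE eqxx orbT.
by rewrite -a_m ltnNge ltnW // (andP acb).1.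
Qed.

Lemma has123star_cons_max m z : {in z, forall v, v < m} ->
  has123star (m :: z) = has123star z.
Proof.
move=> z_lt; apply/has123starP/has123starP => [[[|a] [[|b] [//= ab bz]]] | [a [b occ]]].
- have /z_lt : nth 0 z b \in z by rewrite mem_nth // -ltnS ltnW.
  by move=> /ltn_trans lt_m /lt_m; rewrite ltnn.
- by move=> *; exists a, b.
- by exists a.+1, b.+1.
Qed.

Lemma small_insert_succ m A B : all (leq^~ m) (A ++ B) ->
  small m (A ++ m :: m.+1 :: B) = A ++ m :: B.
Proof.
rewrite all_cat => /andP[/all_filterP eqA /all_filterP eqB].
by rewrite /small filter_cat /= leqnn ltnn eqA eqB.
Qed.

Lemma contains132_insert_succ m A B :
  uniq (A ++ m :: B) -> all (leq^~ m) (A ++ m :: B) ->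
  contains132 (A ++ m :: m.+1 :: B) = contains132 (A ++ m :: B).
Proof.
move=> y_uniq y_le; have x_small : small m (A ++ m :: m.+1 :: B) = A ++ m :: B.
  by apply: small_insert_succ; move: y_le; rewrite !all_cat /= => /and3P[-> _ ->].
apply/idP/idP; last by apply: contains132_subseq; rewrite -x_small filter_subseq.
case/contains132P => a [b [c [+ /andP[ac +]]]].
have [-> abc _ | b_neq abc cb] := eqVneq b m.+1; apply/contains132P.
  (* m.+1 directly follows m, so m can play its role in the occurrence *)
  have m1_y : m.+1 \notin A ++ m :: B.
    by apply/negP => m1y; move: (allP y_le _ m1y); rewrite /= ltnn.
  have x_uniq : uniq (rcons A m ++ m.+1 :: B).
    by rewrite (perm_uniq (permEl (perm_catCA _ [:: _] _))) /= cat_rcons m1_y.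
  move: abc; rewrite -cat_rcons (uniq_subseq_pivot [:: a] [:: c]) //.
  rewrite !sub1seq mem_rcons => /andP[a_mA c_B].
  move: (y_uniq); rewrite cat_uniq => /and3P[_ _ /andP[m_B _]].
  have c_lt_m : c < m.
    rewrite ltn_neqAle (allP y_le) ?mem_cat ?inE ?c_B ?orbT // andbT.
    by apply: contraNneq m_B => <-.
  have a_A : a \in A by move: a_mA; rewrite inE ltn_eqF // (ltn_trans ac c_lt_m).
  by exists a, m, c; rewrite ac c_lt_m (uniq_subseq_pivot [:: a] [:: c]) // !sub1seq a_A.
have b_le : b <= m.
  have : b \in A ++ m :: m.+1 :: B by apply: (mem_subseq abc); rewrite !inE eqxx orbT.
  rewrite !(mem_cat, inE) (negbTE b_neq) /= => b_y.
  by apply: (allP y_le); rewrite mem_cat inE.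
have c_le : c <= m := ltnW (leq_trans cb b_le).
have a_le : a <= m := ltnW (leq_trans ac c_le).
by exists a, b, c; rewrite ac cb -x_small subseq_filter abc /= a_le b_le c_le.
Qed.

Definition avoids_both (x : seq nat) := avoids132 x && avoids123star x.

Definition f_pred n x :=
  [&& avoids132 x, (ind x n).-1 == ind x n.-1, 1 < ind x n.-1
    & avoids123star (small n.-1 x)].

Lemma fE n : f n = count (f_pred n) (perms n).
Proof. exact: size_filter. Qed.

Lemma gE n : g n = count avoids_both (perms n).
Proof. exact: size_filter. Qed.

Lemma avoids_both_cons_max m z : {in z, forall v, v < m} ->
  avoids_both (m :: z) = avoids_both z.
Proof.
move=> z_lt; rewrite /avoids_both /avoids132 /avoids123star.
by rewrite contains132_cons_max // has123star_cons_max.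
Qed.

Lemma mem_perm_iota n y v : perm_eq y (iota 1 n) -> (v \in y) = (0 < v <= n).
Proof. by move/perm_mem ->; rewrite mem_iota add1n ltnS. Qed.

Lemma perm_iota_insert_max n A B :
  perm_eq (A ++ n.+1 :: B) (iota 1 n.+1) = perm_eq (A ++ B) (iota 1 n).
Proof.
have -> : iota 1 n.+1 = rcons (iota 1 n) n.+1.
  by rewrite -cats1 -(addn1 n) iotaD add1n addn1.
by rewrite (perm_catCA A [:: n.+1] B) perm_sym perm_rcons perm_cons perm_sym.
Qed.

Definition insert_succ m y :=
  take (index m y) y ++ m :: m.+1 :: drop (index m y).+1 y.

Lemma insert_succ_cat m A B : m \notin A ->
  insert_succ m (A ++ m :: B) = A ++ m :: m.+1 :: B.
Proof.
move=> m_A; rewrite /insert_succ index_cat (negbTE m_A) /= eqxx addn0.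
by rewrite take_size_cat // drop_cat ltnNge leqnSn subSnn /= drop0.
Qed.

Lemma insert_succ_perm m A B : perm_eq (A ++ m :: B) (iota 1 m) ->
  [/\ A ++ m :: m.+1 :: B \in perms m.+1,
      small m (A ++ m :: m.+1 :: B) = A ++ m :: B,
      insert_succ m (A ++ m :: B) = A ++ m :: m.+1 :: B &
      f_pred m.+1 (A ++ m :: m.+1 :: B) =
        (index m (A ++ m :: B) != 0) && avoids_both (A ++ m :: B)].
Proof.
move=> y_perm.
have y_uniq : uniq (A ++ m :: B) by rewrite (perm_uniq y_perm) iota_uniq.
have y_le : all (leq^~ m) (A ++ m :: B).
  by apply/allP => v; rewrite (mem_perm_iota _ y_perm) => /andP[].
have m_A : m \notin A.
  by move: y_uniq; rewrite cat_uniq => /and3P[_ /hasPn/(_ m (mem_head _ _))].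
have m1_A : m.+1 \notin A.
  by apply/negP => m1A; move: (allP y_le m.+1); rewrite mem_cat m1A /= ltnn => /(_ isT).
split.
- by rewrite mem_permutations -cat_rcons perm_iota_insert_max cat_rcons.
- by apply: small_insert_succ; move: y_le; rewrite !all_cat /= => /and3P[-> _ ->].
- exact: insert_succ_cat.
rewrite /f_pred /= small_insert_succ; last first.
  by move: y_le; rewrite !all_cat /= => /and3P[-> _ ->].
rewrite /avoids132 contains132_insert_succ // /ind !index_cat (negbTE m_A) (negbTE m1_A) /=.
rewrite !eqxx (ltn_eqF (ltnSn m)) addn0 addn1 eqxx /= ltnS lt0n.
by rewrite /avoids_both andbCA.
Qed.

Lemma f_succ_count m : 0 < m ->
  f m.+1 = count (predI (fun y => index m y != 0) avoids_both) (perms m).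
Proof.
move=> m_gt0; rewrite fE.
apply: (count_bij (h := small m) (k := insert_succ m)); rewrite ?permutations_uniq //.
  move=> x; rewrite mem_permutations => x_perm x_f.
  have [A [B def_x]] : exists A B, x = A ++ m :: m.+1 :: B.
    exists (take (index m x) x), (drop (index m x).+2 x); apply: index_succ_split.
      by rewrite (mem_perm_iota _ x_perm) /=.
    by case/and4P: x_f => _ /eqP.
  rewrite def_x in x_perm x_f *.
  rewrite -cat_rcons perm_iota_insert_max cat_rcons in x_perm.
  have [_ -> -> f_eq] := insert_succ_perm x_perm.
  by rewrite mem_permutations x_perm /= -f_eq.
move=> y; rewrite mem_permutations => y_perm y_q.
have m_y : m \in y by rewrite (mem_perm_iota _ y_perm) m_gt0 /=.
move: y_perm y_q; case/splitPr: m_y => A B y_perm y_q.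
have [x_perm small_x -> f_eq] := insert_succ_perm y_perm.
by rewrite x_perm f_eq small_x.
Qed.

Lemma count_max_first n :
  count (predI (fun y => index n.+1 y == 0) avoids_both) (perms n.+1) = g n.
Proof.
rewrite gE; apply: (count_bij (h := behead) (k := cons n.+1)).
- exact: permutations_uniq.
- exact: permutations_uniq.
- move=> [|v z]; rewrite mem_permutations => y_perm /andP[/= + y_av].
    by move/perm_size: y_perm; rewrite size_iota.
  case: ifP => // /eqP v_eq _; subst v.
  have z_perm : perm_eq z (iota 1 n) by rewrite -(perm_iota_insert_max n [::]).
  have z_lt : {in z, forall v, v < n.+1}.
    by move=> v; rewrite (mem_perm_iota _ z_perm) => /andP[].
  by rewrite mem_permutations z_perm -(avoids_both_cons_max z_lt).
move=> z; rewrite mem_permutations => z_perm z_av.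
have z_lt : {in z, forall v, v < n.+1}.
  by move=> v; rewrite (mem_perm_iota _ z_perm) => /andP[].
by rewrite mem_permutations (perm_iota_insert_max n [::]) /= eqxx avoids_both_cons_max.
Qed.

Lemma g_split n : g n =
  count (predI (fun y => index n y == 0) avoids_both) (perms n) +
  count (predI (fun y => index n y != 0) avoids_both) (perms n).
Proof. by rewrite -!count_filter count_predC gE size_filter. Qed.

Theorem lemma3p19 (n : nat) : 2 <= n ->
  ((f n)%:Z = (g (n - 1))%:Z - (g (n - 2))%:Z)%R.
Proof.
case: n => [|[|k]] // _; rewrite subn1 subn2 /=.
rewrite (f_succ_count (ltn0Sn k)) g_split count_max_first PoszD.
by rewrite GRing.addrC GRing.addKr.
Qed.
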